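(* Let $\mathcal G$ be an input-output network with input nodes $\iota_1,\dots,\iota_n$ and output node $o$, with the other nodes partitioned into $\sigma$-nodes (upstream from $o$ and downstream from at least one input node), $d$-nodes (not downstream from any input node) and $u$-nodes (downstream from at least one input node but not upstream from $o$). Consider an admissible system $$\dot x_{\iota_m}=f_{\iota_m}(x_{\iota},x_\sigma,x_d,x_o,\mathcal I),\quad \dot x_\sigma=f_\sigma(x_\iota,x_\sigma,x_d,x_o),\quad \dot x_u=f_u(x_\iota,x_\sigma,x_u,x_d,x_o),\quad \dot x_d=f_d(x_d),\quad \dot x_o=f_o(x_\iota,x_\sigma,x_d,x_o)$$ with a smooth family of linearly stable equilibria $\tilde X(\mathcal I)$ near $\mathcal I_0$, whose $d$-component is $x_d^*$ and whose output component is the input-output function $x_o(\mathcal I)$. Let $x_o^c(\mathcal I)$ be the input-output function (output component of the corresponding family of linearly stable equilibria) of the associated core admissible system obtained by freezing $x_d$ at $x_d^*$: $$\dot x_{\iota_m}=f_{\iota_m}(x_\iota,x_\sigma,x_d^*,x_o,\mathcal I),\quad \dot x_\sigma=f_\sigma(x_\iota,x_\sigma,x_d^*,x_o),\quad \dot x_o=f_o(x_\iota,x_\sigma,x_d^*,x_o).$$ Then $x_o^c$ has a point of infinitesimal homeostasis at $\mathcal I_0$ (i.e. $(x_o^c)'(\mathcal I_0)=0$) if and only if $x_o$ has a point of infinitesimal homeostasis at $\mathcal I_0$ (i.e. $x_o'(\mathcal I_0)=0$).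
   Context: A node $b$ is downstream from $a$ (and $a$ upstream from $b$) if there is a directed path from $a$ to $b$; every node is upstream and downstream from itself. An admissible system assigns a real variable to each node, is smooth, only the input-node equations depend on the scalar input parameter $\mathcal I$, $\partial f_{\iota_m}/\partial\mathcal I\neq0$, and $\partial f_j/\partial x_\ell\equiv0$ unless there is an arrow $\ell\to j$. An equilibrium is linearly stable if all eigenvalues of the Jacobian there have negative real part. *)

From HB Require Import structures.
From mathcomp Require Import all_boot all_order all_algebra.
From mathcomp Require Import all_classical all_reals all_analysis.
From mathcomp Require Import complex.
Set Implicit Arguments. Unset Strict Implicit. Unset Printing Implicit Defensive.
Import Order.TTheory GRing.Theory Num.Theory.
Import numFieldNormedType.Exports.
Local Open Scope classical_set_scope.
Local Open Scope ring_scope.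

Fixpoint Ck {R : realType} {U V : normedModType R} (k : nat)
    (A : set U) (f : U -> V) : Prop :=
  match k with
  | 0 => forall x, A x -> {for x, continuous f}
  | k'.+1 => (forall x, A x -> differentiable f x) /\
             (forall v : U, Ck k' A ('D_v f))
  end.

Definition smooth_on {R : realType} {U V : normedModType R}
    (A : set U) (f : U -> V) : Prop := forall k, Ck k A f.

(* Nodes are 'I_N; [e l j] means there is an arrow l -> j.
   [connect e a b] : b is downstream from a (directed path, reflexive). *)
Section Network.
Variables (N : nat) (e : rel 'I_N) (inputs : {set 'I_N}) (o : 'I_N).

Definition downstream_of_input (j : 'I_N) : bool :=
  [exists m in inputs, connect e m j].

Definition io_network : Prop :=
  [/\ o \notin inputs, (0 < #|inputs|)%N & forall m, m \in inputs -> connect e m o].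

Definition regulatory (j : 'I_N) : bool := (j \notin inputs) && (j != o).

Definition sigma_node (j : 'I_N) : bool :=
  [&& regulatory j, connect e j o & downstream_of_input j].
Definition d_node (j : 'I_N) : bool :=
  regulatory j && ~~ downstream_of_input j.
Definition u_node (j : 'I_N) : bool :=
  [&& regulatory j, downstream_of_input j & ~~ connect e j o].

Definition core_set : {set 'I_N} :=
  [set j | (j \in inputs) || (j == o) || sigma_node j].

Definition core_node (i : 'I_#|core_set|) : 'I_N := enum_val i.
End Network.

Section Systems.
Variables (R : realType) (N : nat).

(* Jacobian (with respect to the state) of F at (x, I):
   entry (j, l) = partial f_j / partial x_l *)
Definition jacobian (F : 'rV[R]_N -> R -> 'rV[R]_N) (x : 'rV[R]_N) (I : R)
  : 'M[R]_N :=
  \matrix_(j, l) ('D_(delta_mx 0 l) (fun y : 'rV[R]_N => F y I) x) 0 j.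

Definition dfdI (F : 'rV[R]_N -> R -> 'rV[R]_N) (j : 'I_N) (x : 'rV[R]_N)
    (I : R) : R :=
  derive (fun J : R => F x J 0 j) I 1.

Definition admissible (e : rel 'I_N) (inputs : {set 'I_N})
    (F : 'rV[R]_N -> R -> 'rV[R]_N) : Prop :=
  [/\ smooth_on setT (fun p : 'rV[R]_N * R => F p.1 p.2),
      (forall j, j \notin inputs -> forall x I I', F x I 0 j = F x I' 0 j),
      (forall m, m \in inputs -> exists x I, dfdI F m x I != 0) &
      (forall j l, l != j -> ~~ e l j ->
         forall x I, jacobian F x I j l = 0)].

Definition equilibrium (F : 'rV[R]_N -> R -> 'rV[R]_N) (x : 'rV[R]_N) (I : R)
  : Prop := F x I = 0.

Definition mx_stable (J : 'M[R]_N) : Prop :=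
  forall z : complex.complex R,
    @eigenvalue (complex.complex R) N
      (map_mx (fun r : R => complex.Complex r 0) J) z ->
    complex.Re z < 0.

Definition linearly_stable (F : 'rV[R]_N -> R -> 'rV[R]_N) (x : 'rV[R]_N)
  (I : R) : Prop := mx_stable (jacobian F x I).

Definition stable_family (F : 'rV[R]_N -> R -> 'rV[R]_N) (X : R -> 'rV[R]_N)
    (I0 : R) : Prop :=
  exists A : set R, [/\ open A, A I0, smooth_on A X &
    forall I, A I -> equilibrium F (X I) I /\ linearly_stable F (X I) I].
End Systems.

Section Core.
Variables (R : realType) (N : nat) (e : rel 'I_N) (inputs : {set 'I_N})
  (o : 'I_N).
Local Notation K := #|core_set e inputs o|.
Local Notation cn := (@core_node N e inputs o).

(* full state obtained from a core state [y]; non-core coordinates are frozen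
   at the values of the reference state [base] (for d-nodes: x_d^*; the core
   vector field does not depend on the u-coordinates) *)
Definition embed_core (base : 'rV[R]_N) (y : 'rV[R]_K) : 'rV[R]_N :=
  \row_j (if [pick i | cn i == j] is Some i then y 0 i else base 0 j).

Definition core_field (F : 'rV[R]_N -> R -> 'rV[R]_N) (base : 'rV[R]_N)
  : 'rV[R]_K -> R -> 'rV[R]_K :=
  fun y I => \row_i F (embed_core base y) I 0 (cn i).

Definition restrict_core (x : 'rV[R]_N) : 'rV[R]_K := \row_i x 0 (cn i).

Definition core_output (y : 'rV[R]_K) : R :=
  if [pick i | cn i == o] is Some i then y 0 i else 0.
End Core.

Arguments downstream_of_input {N} e inputs j.
Arguments io_network {N} e inputs o.
Arguments regulatory {N} inputs o j.
Arguments sigma_node {N} e inputs o j.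
Arguments d_node {N} e inputs o j.
Arguments u_node {N} e inputs o j.
Arguments core_set {N} e inputs o.
Arguments core_node {N} e inputs o i.
Arguments embed_core {R N} e inputs o base y.
Arguments core_field {R N} e inputs o F base y I.
Arguments restrict_core {R N} e inputs o x.
Arguments core_output {R N} e inputs o y.

From Pilot Require Import Defs.
From HB Require Import structures.
From mathcomp Require Import all_boot all_order all_algebra.
From mathcomp Require Import all_classical all_reals all_analysis.
From mathcomp Require Import complex.
Set Implicit Arguments.
Unset Strict Implicit.
Unset Printing Implicit Defensive.
Import Order.TTheory GRing.Theory Num.Theory.
Import numFieldNormedType.Exports.
Local Open Scope classical_set_scope.
Local Open Scope ring_scope.

(* Differentiating the equilibrium equations at I0 gives J X' + dF/dI = 0 for
   the full system, and the same equations on the core rows for the core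
   family embedded in the full state space, whose non-core coordinates are
   constant.  No arrow leaves the set U of u-nodes, so the Jacobian J is block
   triangular with respect to U, and linear stability makes its diagonal block
   on the complement of U invertible.  On that complement the two linearized
   responses satisfy the same equations: on the core rows by construction, and
   on the d-rows because d-nodes receive no arrow from the core and do not see
   I.  Hence the two responses agree at every node outside U, in particular at
   the output. *)

Section Linearization.
Variables (R : realType) (N : nat) (F : 'rV[R]_N -> R -> 'rV[R]_N).
Let Phi := fun p : 'rV[R]_N * R => F p.1 p.2.

Lemma eq_derive_line (V1 V2 W : normedModType R) (f : V1 -> W) (g : V2 -> W)
    (a v : V1) (b w : V2) :
  (forall h : R, f (h *: v + a) = g (h *: w + b)) -> 'D_v f a = 'D_w g b.
Proof.
move=> fg; have fg0 := fg 0; rewrite !scale0r !add0r in fg0.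
rewrite /derive.
suff -> : (fun h : R => h^-1 *: ((f \o shift a) (h *: v) - f a)) =
  (fun h => h^-1 *: ((g \o shift b) (h *: w) - g b)) by [].
by apply/funext => h /=; rewrite fg fg0.
Qed.

Lemma jacobianE x I j l : differentiable Phi (x, I) ->
  Defs.jacobian F x I j l = 'd Phi (x, I) (delta_mx 0 l, 0) 0 j.
Proof.
move=> dPhi; rewrite /Defs.jacobian mxE -deriveE //.
congr (_ 0 j); rewrite (@eq_derive_line _ _ _ (F^~ I) Phi x (delta_mx 0 l)
  (x, I) (delta_mx 0 l, 0)) // => h.
by rewrite /Phi /= scaler0 add0r.
Qed.

Lemma dfdIE x I j : differentiable Phi (x, I) ->
  dfdI F j x I = 'd Phi (x, I) (0, 1) 0 j.
Proof.
move=> dPhi; rewrite -deriveE // derive_mx; last exact: diff_derivable.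
rewrite mxE /dfdI; apply: eq_derive_line => h.
by rewrite /Phi /= scaler0 add0r.
Qed.

Lemma derive_field_along (Y : R -> 'rV[R]_N) (I0 : R) j :
  (forall p, differentiable Phi p) -> derivable Y I0 1 ->
  'D_1 (fun I => F (Y I) I 0 j) I0 =
  \sum_l Defs.jacobian F (Y I0) I0 j l * 'D_1 (fun I => Y I 0 l) I0
  + dfdI F j (Y I0) I0.
Proof.
move=> dPhi dY; have dY' : differentiable Y I0 by apply/derivable1_diffP.
have dYI : differentiable (fun I => (Y I, id I)) I0.
  by apply: differentiable_pair => //; exact: ex_diff.
pose G := Phi \o (fun I => (Y I, id I)).
have dG : differentiable G I0 := differentiable_comp dYI (dPhi _).
have -> : 'D_1 (fun I => F (Y I) I 0 j) I0 = 'D_1 G I0 0 j.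
  by rewrite (derive_mx (diff_derivable dG)) mxE.
rewrite deriveE // /G diff_comp // diff_pair // /= diff_val.
rewrite -(@deriveE _ _ _ Y I0 1 dY') derive_mx //.
set a := \matrix_(i, l) _.
have -> : (a, 1) = (a, 0) + (0, 1) :> 'rV[R]_N * R.
  by apply: injective_projections; rewrite /= ?addr0 ?add0r.
have -> : (a, 0) = \sum_l a 0 l *: ((delta_mx 0 l, 0) : 'rV[R]_N * R).
  rewrite {1}(row_sum_delta a); elim/big_rec2: _ => [//|l u v _ <-].
  by apply: injective_projections; rewrite /= ?scaler0 ?addr0.
rewrite linearD linear_sum mxE summxE dfdIE //; congr (_ + _).
by apply: eq_bigr => l _; rewrite linearZ mxE jacobianE // mulrC /a mxE.
Qed.

Lemma derive_equilibrium_row (Y : R -> 'rV[R]_N) (I0 : R) (A : set R) j :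
  (forall p, differentiable Phi p) -> derivable Y I0 1 -> open A -> A I0 ->
  (forall I, A I -> F (Y I) I 0 j = 0) ->
  \sum_l Defs.jacobian F (Y I0) I0 j l * 'D_1 (fun I => Y I 0 l) I0
  + dfdI F j (Y I0) I0 = 0.
Proof.
move=> dPhi dY oA AI0 FY0; rewrite -derive_field_along //.
rewrite (@near_eq_derive _ _ _ _ (cst 0)) ?derive_cst //.
by near=> I; rewrite FY0 //; near: I; apply: open_nbhs_nbhs.
Unshelve. all: by end_near.
Qed.

Lemma dfdI_eq0 x I j :
  (forall x I I', F x I 0 j = F x I' 0 j) -> dfdI F j x I = 0.
Proof.
move=> F_indepI; rewrite /dfdI.
have -> : (fun J => F x J 0 j) = cst (F x I 0 j).
  by apply/funext => J; apply: F_indepI.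
exact: derive_cst.
Qed.
End Linearization.

Section StableMatrix.
Variables (R : realType) (N : nat) (J : 'M[R]_N).
Hypothesis stableJ : mx_stable J.

Lemma mx_stable_row_free : row_free J.
Proof.
apply: inj_row_free => y yJ; apply/eqP/negPn/negP => y0.
suff /stableJ : eigenvalue (map_mx (fun r : R => complex.Complex r 0) J) 0.
  by rewrite ltxx.
apply/eigenvalueP; exists (map_mx (real_complex R) y).
  by rewrite -map_mxM yJ map_mx0 scale0r.
by rewrite map_mx_eq0.
Qed.

Variable U : pred 'I_N.
Hypothesis J_triangular : forall j l, U l -> ~~ U j -> J j l = 0.

Lemma mx_stable_block_kernel_eq0 (w : 'I_N -> R) :
  (forall l, U l -> w l = 0) ->
  (forall j, ~~ U j -> \sum_l J j l * w l = 0) -> forall l, w l = 0.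
Proof.
move=> wU Jw.
(* Replacing the U-rows of J by identity rows keeps it nonsingular, because J
   is block triangular with respect to U. *)
pose J' := \matrix_(j, l) if U j then (l == j)%:R else J j l.
have J'_free : row_free J'.
  apply: inj_row_free => y yJ'.
  have yU l : U l -> y 0 l = 0.
    move=> Ul; have := congr1 (fun M : 'rV[R]_N => M 0 l) yJ'; rewrite !mxE.
    rewrite (bigD1 l) //= !mxE Ul eqxx mulr1 big1 ?addr0 // => j jl.
    rewrite !mxE; case Uj: (U j); first by rewrite eq_sym (negbTE jl) mulr0.
    by rewrite J_triangular ?mulr0 ?Uj.
  apply/eqP; rewrite -(mulmx_free_eq0 _ mx_stable_row_free) -yJ'.
  apply/eqP/rowP => l; rewrite !mxE; apply: eq_bigr => j _.
  by rewrite !mxE; case Uj: (U j); rewrite // yU // !mul0r.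
have /eqP : \row_l w l *m J'^T = 0.
  apply/rowP => j; rewrite !mxE; case Uj: (U j).
  - rewrite (bigD1 j) //= !mxE Uj eqxx mulr1 wU // big1 ?addr0 // => l lj.
    by rewrite !mxE Uj (negbTE lj) mulr0.
  - rewrite -[RHS](Jw j (negbT Uj)); apply: eq_bigr => l _.
    by rewrite !mxE Uj mulrC.
rewrite mulmx_free_eq0; last by rewrite row_free_unit unitmx_tr -row_free_unit.
by move=> /eqP/rowP w0 l; have := w0 l; rewrite !mxE.
Qed.
End StableMatrix.

Section Network.
Variables (N : nat) (e : rel 'I_N) (inputs : {set 'I_N}) (o : 'I_N).
Local Notation core := (core_set e inputs o).

Lemma output_core : o \in core.
Proof. by rewrite inE eqxx orbT. Qed.

Lemma output_non_u_node : ~~ u_node e inputs o o.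
Proof. by rewrite /u_node /regulatory eqxx andbF. Qed.

Lemma d_node_non_input j : d_node e inputs o j -> j \notin inputs.
Proof. by case/andP => /andP[]. Qed.

Lemma non_u_node_core_or_d j :
  ~~ u_node e inputs o j -> j \notin core -> d_node e inputs o j.
Proof.
rewrite inE /u_node /d_node /sigma_node /regulatory.
by case: (j \in inputs); case: (j == o); case: (connect e j o);
   case: (downstream_of_input e inputs j).
Qed.

Lemma downstream_of_input_step l j :
  downstream_of_input e inputs l -> e l j -> downstream_of_input e inputs j.
Proof.
case/existsP => m /andP[mi ml] elj; apply/existsP; exists m.
by rewrite mi (connect_trans ml) ?connect1.
Qed.

Hypothesis io : io_network e inputs o.

Lemma core_downstream_of_input j :
  j \in core -> downstream_of_input e inputs j.
Proof.
case: io => _ /card_gt0P[m mi] io_o.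
rewrite inE -orbA => /or3P[ji | /eqP -> | /and3P[_ _ //]].
- by apply/existsP; exists j; rewrite ji connect0.
- by apply/existsP; exists m; rewrite mi io_o.
Qed.

Lemma d_node_non_core j : d_node e inputs o j -> j \notin core.
Proof. by case/andP => _; apply: contraNN; apply: core_downstream_of_input. Qed.

Lemma no_arrow_core_d l j : l \in core -> e l j -> ~~ d_node e inputs o j.
Proof.
move=> lc elj; rewrite /d_node negb_and negbK.
by rewrite (downstream_of_input_step (core_downstream_of_input lc) elj) orbT.
Qed.

Lemma u_node_step l j : u_node e inputs o l -> e l j -> u_node e inputs o j.
Proof.
case: io => _ _ io_o; case/and3P => _ dl nlo elj.
have nlo' : ~~ connect e j o.
  by apply: contraNN nlo => /(connect_trans (connect1 elj)).
apply/and3P; split=> //; last exact: downstream_of_input_step dl elj.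
apply/andP; split.
- by apply: contraNN nlo' => /io_o.
- by apply: contraNneq nlo' => ->; rewrite connect0.
Qed.
End Network.

Section CoreEmbedding.
Variables (R : realType) (N : nat) (e : rel 'I_N) (inputs : {set 'I_N})
  (o : 'I_N).
Local Notation core := (core_set e inputs o).
Local Notation cn := (core_node e inputs o).
Local Notation embed := (embed_core e inputs o).

Lemma mem_core_node j : reflect (exists i, cn i = j) (j \in core).
Proof.
apply: (iffP idP) => [jc | [i <-]]; last exact: enum_valP.
by exists (enum_rank_in jc j); rewrite /core_node enum_rankK_in.
Qed.

Lemma embed_core_node (base : 'rV[R]_N) y i : embed base y 0 (cn i) = y 0 i.
Proof.
rewrite mxE; case: pickP => [k /eqP/enum_val_inj -> // | /(_ i)].
by rewrite eqxx.
Qed.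

Lemma embed_core_non_core (base : 'rV[R]_N) y j :
  j \notin core -> embed base y 0 j = base 0 j.
Proof.
move=> jnc; rewrite mxE; case: pickP => // i /eqP ij.
by rewrite -ij enum_valP in jnc.
Qed.

Lemma embed_restrict_core (x : 'rV[R]_N) :
  embed x (restrict_core e inputs o x) = x.
Proof.
apply/rowP => j; have [/mem_core_node[i <-] | jnc] := boolP (j \in core).
  by rewrite embed_core_node mxE.
by rewrite embed_core_non_core.
Qed.

Lemma core_outputE (base : 'rV[R]_N) y :
  core_output e inputs o y = embed base y 0 o.
Proof.
rewrite /core_output mxE; case: pickP => [//|none].
have /mem_core_node[i io] := output_core e inputs o.
by have := none i; rewrite io eqxx.
Qed.

Lemma core_equilibrium_embed F (base : 'rV[R]_N) y I :
  equilibrium (core_field e inputs o F base) y I ->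
  forall i, F (embed base y) I 0 (cn i) = 0.
Proof.
rewrite /equilibrium => eq_y i.
by have := congr1 (fun M : 'rV[R]_#|core| => M 0 i) eq_y; rewrite !mxE.
Qed.

Lemma derivable_embed_core (base : 'rV[R]_N) (Y : R -> 'rV[R]_#|core|) I0 :
  derivable Y I0 1 -> derivable (fun I => embed base (Y I)) I0 1.
Proof.
move=> dY; apply/derivable_mxP => i l.
have -> : (fun I => embed base (Y I) i l) =
    fun I => if [pick k | cn k == l] is Some k then Y I 0 k else base 0 l.
  by apply/funext => I; rewrite mxE.
case: pickP => [k _ | _]; last exact: derivable_cst.
by move/derivable_mxP: dY; apply.
Qed.

Lemma derive_embed_core_non_core (base : 'rV[R]_N) (Y : R -> 'rV[R]_#|core|)
    I0 l :
  l \notin core -> 'D_1 (fun I => embed base (Y I) 0 l) I0 = 0.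
Proof.
move=> lnc; have -> : (fun I => embed base (Y I) 0 l) = cst (base 0 l).
  by apply/funext => I; rewrite embed_core_non_core.
exact: derive_cst.
Qed.
End CoreEmbedding.

Section CoreResponse.
Variables (R : realType) (N : nat) (e : rel 'I_N) (inputs : {set 'I_N})
  (o : 'I_N).
Hypothesis io : io_network e inputs o.
Local Notation core := (core_set e inputs o).
Local Notation U := (u_node e inputs o).

Variables (J : 'M[R]_N) (b a v : 'I_N -> R).
Hypotheses (stableJ : mx_stable J)
  (J_pattern : forall j l, l != j -> ~~ e l j -> J j l = 0)
  (b_non_input : forall j, j \notin inputs -> b j = 0)
  (a_response : forall j, \sum_l J j l * a l + b j = 0)
  (v_response : forall j, j \in core -> \sum_l J j l * v l + b j = 0)
  (v_non_core : forall l, l \notin core -> v l = 0).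

Lemma jacobian_u_triangular j l : U l -> ~~ U j -> J j l = 0.
Proof.
move=> Ul Uj; apply: J_pattern; first by apply: contraNneq Uj => <-.
by apply: contraNN Uj; apply: u_node_step.
Qed.

Lemma core_response_d_row j : d_node e inputs o j -> \sum_l J j l * v l = 0.
Proof.
move=> dj; apply: big1 => l _.
have [lc | lnc] := boolP (l \in core); last by rewrite v_non_core ?mulr0.
rewrite J_pattern ?mul0r //.
  by apply: contraNneq (d_node_non_core io dj) => <-.
by apply: contraTN dj; apply: no_arrow_core_d.
Qed.

Lemma responses_agree_non_u_rows j :
  ~~ U j -> \sum_l J j l * a l = \sum_l J j l * v l.
Proof.
move=> Uj; have [jc | jnc] := boolP (j \in core).
  by apply: (addIr (b j)); rewrite a_response v_response.
have dj := non_u_node_core_or_d Uj jnc.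
rewrite (core_response_d_row dj); have := a_response j.
by rewrite (b_non_input (d_node_non_input dj)) addr0.
Qed.

Lemma responses_agree_at_output : a o = v o.
Proof.
pose w l := if U l then 0 else a l - v l.
have w0 : forall l, w l = 0.
  apply: (mx_stable_block_kernel_eq0 stableJ jacobian_u_triangular).
    by move=> l Ul; rewrite /w Ul.
  move=> j Uj.
  transitivity (\sum_l J j l * a l - \sum_l J j l * v l); last first.
    by rewrite responses_agree_non_u_rows ?subrr.
  rewrite -sumrB; apply: eq_bigr => l _; rewrite /w; case: ifP => Ul.
    by rewrite jacobian_u_triangular // !mul0r subrr.
  by rewrite mulrBr.
apply/eqP; rewrite -subr_eq0; have := w0 o.
by rewrite /w (negbTE (output_non_u_node _ _ _)) => ->.
Qed.
End CoreResponse.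

Theorem theorem3p2 (R : realType) (N : nat) (e : rel 'I_N)
    (inputs : {set 'I_N}) (o : 'I_N)
    (F : 'rV[R]_N -> R -> 'rV[R]_N) (Xt : R -> 'rV[R]_N)
    (Xc : R -> 'rV[R]_#|core_set e inputs o|) (I0 : R) :
  io_network e inputs o ->
  admissible e inputs F ->
  stable_family F Xt I0 ->
  (* Xc: the family of linearly stable equilibria of the core system
     (x_d frozen at x_d^* = d-component of Xt I0) corresponding to Xt *)
  stable_family (core_field e inputs o F (Xt I0)) Xc I0 ->
  Xc I0 = restrict_core e inputs o (Xt I0) ->
  (derive (fun I : R => core_output e inputs o (Xc I)) I0 1 = 0 <->
   derive (fun I : R => Xt I 0 o) I0 1 = 0).
Proof.
move=> io [smF F_indepI _ F_pattern] [At [oAt AtI0 smXt eqXt]]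
  [Ac [oAc AcI0 smXc eqXc]] XcI0.
set x0 := Xt I0; pose Y I := embed_core e inputs o x0 (Xc I).
have dPhi p : differentiable (fun p : 'rV[R]_N * R => F p.1 p.2) p.
  by have [dF _] := smF 1%N; exact: dF.
have dXt : derivable Xt I0 1.
  by have [dX _] := smXt 1%N; exact/diff_derivable/dX.
have dY : derivable Y I0 1.
  apply: derivable_embed_core.
  by have [dX _] := smXc 1%N; exact/diff_derivable/dX.
have YI0 : Y I0 = x0 by rewrite /Y XcI0 embed_restrict_core.
have -> : (fun I => core_output e inputs o (Xc I)) = fun I => Y I 0 o.
  by apply/funext => I; rewrite (core_outputE x0).
suff -> : 'D_1 (fun I => Xt I 0 o) I0 = 'D_1 (fun I => Y I 0 o) I0 by [].
apply: (responses_agree_at_output io (J := Defs.jacobian F x0 I0)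
  (b := fun j => dfdI F j x0 I0) (a := fun l => 'D_1 (fun I => Xt I 0 l) I0)
  (v := fun l => 'D_1 (fun I => Y I 0 l) I0)).
- by have [_] := eqXt I0 AtI0.
- by move=> j l lj elj; apply: F_pattern.
- by move=> j j_ni; apply: dfdI_eq0; apply: F_indepI.
- move=> j; apply: (derive_equilibrium_row dPhi dXt oAt AtI0) => I AI.
  by have [-> _] := eqXt I AI; rewrite mxE.
- move=> _ /mem_core_node[i <-]; rewrite -YI0.
  apply: (derive_equilibrium_row dPhi dY oAc AcI0) => I AI.
  by have [eqI _] := eqXc I AI; apply: core_equilibrium_embed eqI i.
- by move=> l lnc; apply: derive_embed_core_non_core.
Qed.
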